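(* Let $N=(G=(V,E),\sigma,u,s)$ be a skew-symmetric network and $f$ an IS-flow in $N$. Then $f$ has maximum value among IS-flows in $N$ if and only if the split-graph $S(G^+,u_f)$ contains no regular path from $s$ to $s'$.
   Context: A skew-symmetric graph is a finite directed graph $G=(V,E)$ (parallel arcs allowed) with a map $\sigma$ of $V\cup E$ onto itself such that $\sigma(x)\ne x$, $\sigma(\sigma(x))=x$ for all $x$, $\sigma(V)=V$, and for each arc $a$ from $v$ to $w$, $\sigma(a)$ is an arc from $\sigma(w)$ to $\sigma(v)$. A function $h$ on $E$ is symmetric if $h(a)=h(\sigma(a))$. A skew-symmetric network is $N=(G,\sigma,u,s)$ with $u:E\to\mathbb Z_{\ge0}$ symmetric and source $s$; $s'=\sigma(s)$ is the sink. A flow is $f:E\to\mathbb R_{\ge0}$ with $f\le u$ and flow conservation at every node other than $s,s'$; value $|f|$ is the net outflow at $s$. An IS-flow is an integer-valued symmetric flow. $G^+=(V,E^+)$ is obtained from $G$ by adding for each arc $a=(x,y)$ a reverse arc $a^R=(y,x)$, with $\sigma(a^R)=(\sigma(a))^R$; residual capacities: $u_f(a)=u(a)-f(a)$ for $a\in E$, $u_f(a^R)=f(a)$. For a skew-symmetric graph $H$ with nonnegative integer symmetric capacity $h$, the split-graph $S(H,h)$ is obtained by replacing each arc $a=(x,y)$ by two parallel arcs $a_1,a_2$ from $x$ to $y$ with capacities $\lceil h(a)/2\rceil$ and $\lfloor h(a)/2\rfloor$ respectively and deleting arcs of zero capacity; its symmetry is $\sigma(a_i)=(\sigma(a))_i$.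 A regular path is a directed path containing no pair of mutually symmetric arcs ($a$ and $\sigma(a)$). *)

From mathcomp Require Import all_boot all_order all_algebra.
Set Implicit Arguments. Unset Strict Implicit. Unset Printing Implicit Defensive.
Import GRing.Theory Num.Theory.

(* A directed multigraph: finite node type V, finite arc type A,
   arc a goes from [tl a] to [hd a] (parallel arcs allowed). *)

Definition skew_symmetric (V A : finType) (tl hd : A -> V)
    (sV : V -> V) (sA : A -> A) : Prop :=
  [/\ (forall v, sV v != v), (forall v, sV (sV v) = v),
      (forall a, sA a != a), (forall a, sA (sA a) = a)
    & forall a, tl (sA a) = sV (hd a) /\ hd (sA a) = sV (tl a)].

Definition symmetric_fun (A : Type) (sA : A -> A) (h : A -> nat) : Prop :=
  forall a, h (sA a) = h a.

(** IS-flow: integer (hence nat, since flows are nonnegative) valued,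
    capacity respecting, conservative off {s, s'}, and symmetric. *)
Definition is_ISflow (V E : finType) (tl hd : E -> V) (sV : V -> V)
    (sE : E -> E) (u : E -> nat) (s : V) (f : E -> nat) : Prop :=
  [/\ (forall a, f a <= u a),
      (forall v, v != s -> v != sV s ->
         \sum_(a | hd a == v) f a = \sum_(a | tl a == v) f a)
    & symmetric_fun sE f].

Definition flow_value (V E : finType) (tl hd : E -> V) (s : V)
    (f : E -> nat) : int :=
  (\sum_(a | tl a == s) f a)%:Z - (\sum_(a | hd a == s) f a)%:Z.

(** The graph G^+: arcs [inl a] (= a) and [inr a] (= a^R). *)
Definition plus_tl (V E : Type) (tl hd : E -> V) (x : E + E) : V :=
  match x with inl a => tl a | inr a => hd a end.
Definition plus_hd (V E : Type) (tl hd : E -> V) (x : E + E) : V :=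
  match x with inl a => hd a | inr a => tl a end.
Definition plus_sigma (E : Type) (sE : E -> E) (x : E + E) : E + E :=
  match x with inl a => inl (sE a) | inr a => inr (sE a) end.
Definition residual (E : Type) (u f : E -> nat) (x : E + E) : nat :=
  match x with inl a => u a - f a | inr a => f a end.

(** Split-graph S(H,h): each arc a of H becomes (a,true) = a_1 with capacity
    ceil(h a / 2) and (a,false) = a_2 with capacity floor(h a / 2); arcs of
    zero capacity are deleted, i.e. the arcs of S(H,h) are the pairs x with
    [split_arc h x]. *)
Definition split_cap (A : Type) (h : A -> nat) (x : A * bool) : nat :=
  if x.2 then uphalf (h x.1) else (h x.1)./2.
Definition split_arc (A : Type) (h : A -> nat) (x : A * bool) : bool :=
  0 < split_cap h x.
Definition split_tl (V A : Type) (tl : A -> V) (x : A * bool) : V := tl x.1.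
Definition split_hd (V A : Type) (hd : A -> V) (x : A * bool) : V := hd x.1.
Definition split_sigma (A : Type) (sA : A -> A) (x : A * bool) : A * bool :=
  (sA x.1, x.2).

Fixpoint is_walk (V A : eqType) (tl hd : A -> V) (x y : V) (p : seq A)
    : bool :=
  match p with
  | [::] => x == y
  | a :: q => (tl a == x) && is_walk tl hd (hd a) y q
  end.

Definition regular (A : eqType) (sA : A -> A) (p : seq A) : bool :=
  all (fun a => sA a \notin p) p.

Definition split_regular_path (V A : eqType) (tl hd : A -> V) (sA : A -> A)
    (h : A -> nat) (x y : V) (p : seq (A * bool)) : bool :=
  [&& all (split_arc h) p,
      is_walk (split_tl tl) (split_hd hd) x y p
    & regular (split_sigma sA) p].

From mathcomp Require Import all_boot all_order all_algebra zify.
Set Implicit Arguments. Unset Strict Implicit.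
Import Order.TTheory GRing.Theory Num.Theory.

(* If the split graph S(G^+, u_f) has a regular s-s' path P, which may be taken
   simple, augmenting f along P and along its mirror image sigma(P) yields an
   IS-flow of value |f| + 2: by regularity, when P uses copies of both a and
   sigma(a) they are different halves a_1, a_2, and a_2 only exists when
   u_f(a) >= 2, so P and sigma(P) together respect the residual capacities.
   Conversely, if g is an IS-flow of larger value, the residual difference (g - f on
   the arcs a, f - g on the reverse arcs a^R) is a symmetric function on G^+ below
   u_f, conservative off {s, s'}, with positive excess at s.  Blowing each arc up
   into that many parallel unit arcs, a regular s-s' walk is found by induction on
   the number of unit arcs: take an arc a leaving s; if it ends at s' we are done,
   if it is a loop at s delete it together with sigma(a); otherwise some arc b
   leaves hd(a), and deleting b, sigma(b) while rerouting a to hd(b) and sigma(a)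
   from tl(sigma b) preserves all the hypotheses, and a walk of the smaller graph
   expands back.
   Finally, on a simple such walk each unit copy of a is sent to a_1 or a_2
   according to whether the copy of sigma(a) on the walk (if any) has a larger or
   smaller index, which gives a regular path of the split graph. *)

Definition skew_incidence (V A : Type) (tl hd : A -> V) (sV : V -> V) (sA : A -> A) :=
  forall a, tl (sA a) = sV (hd a) /\ hd (sA a) = sV (tl a).

Lemma sum_count_mem (T : finType) (P : pred T) (s : seq T) :
  (\sum_(x | P x) count_mem x s)%N = count P s.
Proof.
elim: s => [|y s IH] /=; first by rewrite big1.
rewrite big_split /= IH; congr (_ + _)%N.
rewrite big_mkcond (bigD1 y) //= eqxx big1 ?addn0; first by case: (P y).
by move=> x /negbTE; rewrite eq_sym => ->; case: (P x).
Qed.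

Lemma uniq_map_inj_in (T1 T2 : eqType) (f : T1 -> T2) (s : seq T1) :
  uniq (map f s) -> {in s &, injective f}.
Proof.
elim: s => //= z s IH /andP[fz_s uniq_s] x y; rewrite !inE.
case/orP=> [/eqP->|xs]; case/orP=> [/eqP->|ys] //; last exact: IH.
- by move=> fzy; case/negP: fz_s; rewrite fzy map_f.
- by move=> fxz; case/negP: fz_s; rewrite -fxz map_f.
Qed.

Section Walks.
Variables (V A : eqType) (tl hd : A -> V).
Local Notation walk := (is_walk tl hd).

Lemma is_walk_cat x y z p q : walk x y p -> walk y z q -> walk x z (p ++ q).
Proof.
elim: p x => [|a p IH] x /=; first by move/eqP->.
by case/andP=> -> /IH walk_pq /walk_pq ->.
Qed.

Lemma is_walk_map (B : eqType) (g : B -> A) x y (p : seq B) :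
  walk x y (map g p) = is_walk (tl \o g) (hd \o g) x y p.
Proof. by elim: p x => //= b p IH x; rewrite IH. Qed.

Lemma is_walk_flatten (B : eqType) (tlB hdB : B -> V) (ex : B -> seq A) x y p :
  (forall b, walk (tlB b) (hdB b) (ex b)) ->
  is_walk tlB hdB x y p -> walk x y (flatten (map ex p)).
Proof.
move=> walk_ex; elim: p x => [|b p IH] x //=.
by case/andP=> /eqP <- /IH; apply: is_walk_cat.
Qed.

Lemma is_walk_count x y p v :
  walk x y p -> (count (fun a => hd a == v) p + (v == x) =
                 count (fun a => tl a == v) p + (v == y))%N.
Proof.
elim: p x => [|a p IH] x /=; first by move/eqP->.
by case/andP=> /eqP <- /IH; rewrite (eq_sym (tl a)) (eq_sym (hd a)); lia.
Qed.

Lemma is_walk_suffix x y p a : walk x y p -> a \in p ->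
  exists2 q, walk (tl a) y (a :: q) & exists r, p = r ++ a :: q.
Proof.
move=> walk_p a_p; case/splitPr: a_p walk_p => r q walk_p.
exists q; last by exists r.
elim: r x walk_p => [|b r IH] x /=; first by case/andP=> /eqP-> ->; rewrite eqxx.
by case/andP=> _ /IH.
Qed.

Lemma is_walk_shorten x y p : walk x y p ->
  exists q, [/\ walk x y q, {subset q <= p} & uniq (map tl q)].
Proof.
elim: p x => [|a p IH] x /=; first by exists [::].
case/andP=> /eqP tl_a /IH [q [walk_q sub_q uniq_q]].
case: (boolP (x \in map tl q)) => [/mapP [b bq ->] | x_q].
  have [q' walk_q' [r def_q]] := is_walk_suffix walk_q bq.
  exists (b :: q'); split=> //.
    by move=> c c_q'; rewrite inE sub_q ?orbT // def_q mem_cat c_q' orbT.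
  by move: uniq_q; rewrite def_q map_cat cat_uniq => /and3P[].
exists (a :: q); split=> /=; first by rewrite tl_a eqxx.
  by move=> c; rewrite !inE => /orP[-> // | /sub_q ->]; rewrite orbT.
by rewrite tl_a x_q.
Qed.

Variables (sV : V -> V) (sA : A -> A).

Definition mirror (p : seq A) := rev (map sA p).

Lemma is_walk_mirror x y p : skew_incidence tl hd sV sA ->
  walk x y p -> walk (sV y) (sV x) (mirror p).
Proof.
rewrite /mirror => skew; elim: p x => [|a p IH] x /=; first by move/eqP->.
case/andP=> /eqP <- /IH walk_p; rewrite rev_cons -cats1.
by apply: is_walk_cat walk_p _ => /=; have [-> ->] := skew a; rewrite !eqxx.
Qed.

Lemma count_mem_mirror (p : seq A) a : involutive sA ->
  count_mem a (p ++ mirror p) = count_mem a p + count_mem (sA a) p.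
Proof.
move=> sAK; rewrite count_cat /mirror count_rev count_map; congr (_ + _).
by apply: eq_count => b; rewrite /= (can2_eq sAK sAK) eq_sym.
Qed.

End Walks.

Lemma regular_sub (A : eqType) (sA : A -> A) (p q : seq A) :
  {subset q <= p} -> regular sA p -> regular sA q.
Proof.
move=> sub_qp /allP reg_p; apply/allP=> a /sub_qp a_p.
by apply: contra (reg_p a a_p) => /sub_qp.
Qed.

Lemma regular_collapse (A : eqType) (sA pi : A -> A) (p q : seq A) :
  {morph pi : a / sA a} -> {in q, forall a, pi a \in p} ->
  regular sA p -> regular sA q.
Proof.
move=> pi_sA pi_q /allP reg_p; apply/allP=> a a_q; apply/negP=> sa_q.
by move/negP: (reg_p _ (pi_q a a_q)); rewrite -pi_sA pi_q.
Qed.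

Section FlowValue.
Variables (V E : finType) (tl hd : E -> V).

Lemma eq_flow_value f g v : f =1 g -> flow_value tl hd v f = flow_value tl hd v g.
Proof. by move=> fg; congr (Posz _ - Posz _)%R; apply: eq_bigr. Qed.

Lemma flow_valueD f g v :
  flow_value tl hd v (fun e => f e + g e)%N =
  (flow_value tl hd v f + flow_value tl hd v g)%R.
Proof. by rewrite /flow_value !big_split !PoszD /=; lia. Qed.

Lemma flow_value_eq0 f v :
  (\sum_(a | hd a == v) f a = \sum_(a | tl a == v) f a)%N <->
  flow_value tl hd v f = 0%R.
Proof.
rewrite /flow_value; split=> [-> | /eqP]; first by rewrite subrr.
by rewrite subr_eq0 => /eqP [->].
Qed.

Lemma flow_value_gt0 f v :
  (0 < flow_value tl hd v f)%R =
  (\sum_(a | hd a == v) f a < \sum_(a | tl a == v) f a)%N.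
Proof. by rewrite /flow_value subr_gt0 ltz_nat. Qed.

Lemma flow_value_walk x y p v : is_walk tl hd x y p ->
  flow_value tl hd v (fun a => count_mem a p) = ((v == x)%:Z - (v == y)%:Z)%R.
Proof.
move/(is_walk_count v); rewrite /flow_value !sum_count_mem.
(* [set] merges the two copies of each [count], whose eqType instances agree only
   up to conversion, so that [lia] sees a single atom. *)
set ct := count _ p; set ch := count _ p; lia.
Qed.

Lemma flow_value_walk_mirror (sV : V -> V) (sE : E -> E) s p v :
  involutive sV -> skew_incidence tl hd sV sE -> is_walk tl hd s (sV s) p ->
  flow_value tl hd v (fun a => count_mem a (p ++ mirror sE p)) =
  (((v == s)%:Z - (v == sV s)%:Z) *+ 2)%R.
Proof.
move=> sVK skew walk_p; have := is_walk_mirror skew walk_p; rewrite sVK => walk_mp.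
rewrite (eq_flow_value _ (fun a => count_cat _ _ _)) flow_valueD.
by rewrite (flow_value_walk _ walk_p) (flow_value_walk _ walk_mp) mulr2n.
Qed.

Lemma flow_value_plus h v :
  flow_value (plus_tl tl hd) (plus_hd tl hd) v h =
  (flow_value tl hd v (fun e => h (inl e)) -
   flow_value tl hd v (fun e => h (inr e)))%R.
Proof. by rewrite /flow_value !big_sumType !PoszD /=; lia. Qed.

Lemma flow_value_shift f g h v :
  (forall e, g e + h (inr e) = f e + h (inl e))%N ->
  flow_value tl hd v g =
  (flow_value tl hd v f + flow_value (plus_tl tl hd) (plus_hd tl hd) v h)%R.
Proof. by move/(eq_flow_value v); rewrite !flow_valueD flow_value_plus; lia. Qed.

End FlowValue.

Lemma plus_skew (V E : finType) (tl hd : E -> V) (sV : V -> V) (sE : E -> E) :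
  skew_symmetric tl hd sV sE ->
  skew_symmetric (plus_tl tl hd) (plus_hd tl hd) sV (plus_sigma sE).
Proof.
case=> sV_neq sVK sE_neq sEK skew; split=> // [[e|e]|[e|e]|[e|e]] /=.
- by apply: contraNneq (sE_neq e) => -[->].
- by apply: contraNneq (sE_neq e) => -[->].
- by rewrite sEK.
- by rewrite sEK.
- exact: skew.
- by have [-> ->] := skew e.
Qed.

Section RegularWalk.
Variables (V : eqType) (A : finType) (sV : V -> V) (sA : A -> A) (s : V).
Hypotheses (sV_neq : forall v, sV v != v) (sVK : involutive sV).
Hypotheses (sA_neq : forall a, sA a != a) (sAK : involutive sA).
Implicit Types (D : {set A}) (f tl hd : A -> V).
Local Notation skew tl hd := (skew_incidence tl hd sV sA).

Lemma sA_eqF a : (a == sA a) = false.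
Proof. by rewrite eq_sym (negbTE (sA_neq a)). Qed.

Definition deg D f v := (\sum_(a in D) (f a == v))%N.

Definition mirror_closed D := {in D, forall a, sA a \in D}.

Definition symmetric_excess D tl hd :=
  [/\ skew tl hd, mirror_closed D,
      forall v, v != s -> v != sV s -> deg D tl v = deg D hd v
    & deg D hd s < deg D tl s].

Definition regular_walk D tl hd p :=
  [&& all (mem D) p, is_walk tl hd s (sV s) p & regular sA p].

Lemma deg_gt0P D f v : reflect (exists2 a, a \in D & f a = v) (0 < deg D f v).
Proof.
apply: (iffP idP) => [|[a aD <-]]; last by rewrite /deg (big_setD1 a) //= eqxx.
case: (pickP (fun a => (a \in D) && (f a == v))) => [a /andP[aD /eqP] | none].
  by exists a.
by rewrite /deg big1 // => a aD; move: (none a); rewrite aD /= => ->.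
Qed.

Lemma deg_setD_mirror D f b v : b \in D -> sA b \in D ->
  deg D f v = (f b == v) + (f (sA b) == v) + deg (D :\ b :\ sA b) f v.
Proof.
move=> bD sbD; rewrite /deg (big_setD1 b) // (big_setD1 (sA b)) /= ?addnA //.
by rewrite in_setD1 sbD sA_neq.
Qed.

Lemma card_setD_mirror D b : b \in D -> #|D :\ b :\ sA b| < #|D|.
Proof.
move=> bD; apply: leq_ltn_trans (subset_leq_card (subsetDl _ _)) _.
exact: proper_card (properD1 bD).
Qed.

Lemma mirror_closed_setD D b : mirror_closed D -> mirror_closed (D :\ b :\ sA b).
Proof.
move=> closedD a; rewrite !in_setD1 => /and3P[a_sb a_b aD].
rewrite closedD // andbT (can_eq sAK) a_b /=.
by apply: contra a_sb => /eqP <-; rewrite sAK.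
Qed.

Lemma symmetric_excess_shift D D' tl hd tl' hd' (k : V -> nat) :
  symmetric_excess D tl hd -> skew tl' hd' -> mirror_closed D' ->
  (forall v, deg D tl v = deg D' tl' v + k v) ->
  (forall v, deg D hd v = deg D' hd' v + k v) ->
  symmetric_excess D' tl' hd'.
Proof.
case=> _ _ bal exc skew' closed' tlk hdk; split=> // [v v_s v_s'|].
  by apply/eqP; rewrite -(eqn_add2r (k v)) -tlk -hdk bal.
by rewrite -(ltn_add2r (k s)) -tlk -hdk.
Qed.

Lemma symmetric_excess_loop D tl hd a : symmetric_excess D tl hd ->
  a \in D -> tl a = hd a -> symmetric_excess (D :\ a :\ sA a) tl hd.
Proof.
move=> exD aD loop_a; have [skew_th closed _ _] := exD.
have [tl_sa hd_sa] := skew_th a.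
apply: (symmetric_excess_shift (k := fun v => (hd a == v) + (sV (hd a) == v)) exD)
  => // [|v|v]; first exact: mirror_closed_setD.
- by rewrite (deg_setD_mirror _ v aD (closed a aD)) tl_sa loop_a; lia.
- by rewrite (deg_setD_mirror _ v aD (closed a aD)) hd_sa loop_a; lia.
Qed.

Definition redirect f (a b : A) e := if e == a then f b else f e.

Lemma deg_redirect D f a b v : a \in D ->
  deg D (redirect f a b) v + (f a == v) = deg D f v + (f b == v).
Proof.
move=> aD; rewrite /deg !(big_setD1 a aD) /= /redirect eqxx.
rewrite (eq_bigr (fun e => (f e == v) : nat)) => [|e]; first lia.
by rewrite in_setD1 => /andP[/negbTE ->].
Qed.

Lemma skew_redirect tl hd a b :
  skew tl hd -> skew (redirect tl (sA a) (sA b)) (redirect hd a b).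
Proof.
move=> skew_th e; have tlS c : tl (sA c) = sV (hd c) by case: (skew_th c).
have hdS c : hd (sA c) = sV (tl c) by case: (skew_th c).
rewrite /redirect (can_eq sAK) (canF_eq sAK).
by split; case: ifP; rewrite ?tlS ?hdS ?sVK.
Qed.

Lemma symmetric_excess_splice D tl hd a b : symmetric_excess D tl hd ->
  a \in D :\ b :\ sA b -> b \in D -> tl b = hd a ->
  symmetric_excess (D :\ b :\ sA b) (redirect tl (sA a) (sA b)) (redirect hd a b).
Proof.
move=> exD aD' bD tl_b; have [skew_th closed _ _] := exD.
have closedD' := mirror_closed_setD (b := b) closed.
have [[tl_sa _] [_ hd_sb]] := (skew_th a, skew_th b).
apply: (symmetric_excess_shift (k := fun v => (hd a == v) + (sV (hd a) == v)) exD)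
  => // [|v|v]; first exact: skew_redirect.
- move: (deg_redirect tl (sA b) v (closedD' a aD')).
  by rewrite (deg_setD_mirror _ v bD (closed b bD)) tl_sa tl_b; lia.
- move: (deg_redirect hd b v aD').
  by rewrite (deg_setD_mirror _ v bD (closed b bD)) hd_sb tl_b; lia.
Qed.

Definition splice (a b : A) (p : seq A) : seq A :=
  flatten (map (fun e => if e == a then [:: a; b]
                         else if e == sA a then [:: sA b; sA a] else [:: e]) p).

Lemma is_walk_splice tl hd a b x y p : skew tl hd -> tl b = hd a ->
  is_walk (redirect tl (sA a) (sA b)) (redirect hd a b) x y p ->
  is_walk tl hd x y (splice a b p).
Proof.
move=> skew_th tl_b; apply: is_walk_flatten => e; rewrite /redirect.
have [[tl_sa _] [_ hd_sb]] := (skew_th a, skew_th b).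
case: (eqVneq e a) => [->|_] /=; first by rewrite sA_eqF tl_b !eqxx.
by case: (eqVneq e (sA a)) => [->|_] /=; rewrite !eqxx ?tl_sa ?hd_sb ?tl_b ?eqxx.
Qed.

Lemma regular_splice a b p : a != b -> sA a != b ->
  b \notin p -> sA b \notin p -> regular sA p -> regular sA (splice a b p).
Proof.
move=> a_b sa_b b_p sb_p reg_p.
pose pi e := if e == b then a else if e == sA b then sA a else e.
apply: (regular_collapse (pi := pi) _ _ reg_p) => [e|t /flattenP [_ /mapP [e e_p ->]]].
  rewrite /pi (can_eq sAK) (canF_eq sAK e b).
  case: (eqVneq e b) => [->|_]; first by rewrite sA_eqF.
  by case: eqP => [e_sb|_]; rewrite ?e_sb ?sAK.
have a_sb : (a == sA b) = false by rewrite -(canF_eq sAK) (negbTE sa_b).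
case: (eqVneq e a) e_p => [-> a_p|_ e_p].
  by rewrite !inE => /orP[] /eqP ->; rewrite /pi ?eqxx // (negbTE a_b) a_sb.
case: (eqVneq e (sA a)) e_p => [-> sa_p|_ e_p].
  rewrite !inE => /orP[] /eqP ->; rewrite /pi ?eqxx; first by rewrite eq_sym sA_eqF.
  by rewrite (negbTE sa_b) (can_eq sAK) (negbTE a_b).
rewrite inE => /eqP ->; rewrite /pi.
have [-> ->] : (e == b) = false /\ (e == sA b) = false.
  by split; [apply: contraNF b_p | apply: contraNF sb_p] => /eqP <-.
by [].
Qed.

Lemma regular_walk_setD D tl hd b p :
  regular_walk (D :\ b :\ sA b) tl hd p -> regular_walk D tl hd p.
Proof.
rewrite /regular_walk => /and3P[/allP p_D -> ->]; rewrite !andbT.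
by apply/allP=> e /p_D; rewrite /= !in_setD1 => /and3P[].
Qed.

Lemma regular_walk_splice D tl hd a b p :
  skew tl hd -> b \in D -> sA b \in D -> tl b = hd a -> a != b -> sA a != b ->
  regular_walk (D :\ b :\ sA b) (redirect tl (sA a) (sA b)) (redirect hd a b) p ->
  regular_walk D tl hd (splice a b p).
Proof.
move=> skew_th bD sbD tl_b a_b sa_b /and3P[/allP p_D' walk_p reg_p].
have p_D e : e \in p -> [/\ e \in D, e != b & e != sA b].
  by move/p_D'; rewrite /= !in_setD1 => /and3P[].
apply/and3P; split; first apply/allP=> t /flattenP [_ /mapP [e /p_D [eD _ _] ->]].
- case: ifP => [/eqP <-|_]; last case: ifP => [/eqP <-|_].
  + by rewrite !inE => /orP[] /eqP ->.
  + by rewrite !inE => /orP[] /eqP ->.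
  + by rewrite inE => /eqP ->.
- exact: is_walk_splice.
- by apply: regular_splice => //; apply/negP => /p_D []; rewrite eqxx.
Qed.

Lemma regular_walk_of_excess D tl hd :
  symmetric_excess D tl hd -> exists p, regular_walk D tl hd p.
Proof.
elim: {D}_.+1 {-2}D (ltnSn #|D|) tl hd => // n IH D cardD tl hd exD.
have [skew_th closed bal exc] := exD.
have [a aD tl_a] := deg_gt0P D tl s (leq_ltn_trans (leq0n _) exc).
have cardD' b : b \in D -> #|D :\ b :\ sA b| < n.
  by move=> bD; apply: leq_trans (card_setD_mirror bD) _.
case: (eqVneq (hd a) (sV s)) => [hd_a | hd_a_s'].
  exists [:: a]; rewrite /regular_walk /= aD tl_a hd_a !eqxx /regular /=.
  by rewrite inE eq_sym sA_eqF.
case: (eqVneq (hd a) s) => [hd_a | hd_a_s].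
  have [|p walk_p] := IH _ (cardD' a aD) tl hd.
    by apply: symmetric_excess_loop; rewrite ?tl_a.
  by exists p; apply: regular_walk_setD walk_p.
have [b bD tl_b] : exists2 b, b \in D & tl b = hd a.
  by apply/deg_gt0P; rewrite bal //; apply/deg_gt0P; exists a.
have a_b : a != b by apply: contraNneq hd_a_s => ab; rewrite -tl_b -ab tl_a.
have sa_b : sA a != b.
  apply: contraNneq (sV_neq (hd a)) => sab.
  by have [<- _] := skew_th a; rewrite sab tl_b.
have aD' : a \in D :\ b :\ sA b by rewrite !in_setD1 aD a_b !andbT -(canF_eq sAK).
have [p walk_p] := IH _ (cardD' b bD) _ _ (symmetric_excess_splice exD aD' bD tl_b).
exists (splice a b p).
exact: regular_walk_splice skew_th bD (closed b bD) tl_b a_b sa_b walk_p.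
Qed.

End RegularWalk.

Section SplitLift.
Variables (A : eqType) (sA : A -> A) (n : nat).
Hypothesis sAK : involutive sA.
Implicit Types (q : seq (A * 'I_n)) (x y : A * 'I_n).

Definition copy_sigma x : A * 'I_n := (sA x.1, x.2).

Definition split_label q x := all (fun y => (y.1 == sA x.1) ==> (x.2 < y.2)) q.

Definition split_lift q := [seq (x.1, split_label q x) | x <- q].

Lemma split_labelE q x y : uniq (map fst q) -> y \in q -> y.1 = sA x.1 ->
  split_label q x = (x.2 < y.2).
Proof.
move=> uniq_q yq y_sx; apply/allP/idP => [|lt_xy z zq].
  by move/(_ y yq); rewrite y_sx eqxx.
apply/implyP => /eqP z_sx; suff -> : z = y by [].
by apply: (uniq_map_inj_in uniq_q) => //; rewrite y_sx.
Qed.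

Lemma copy_sigma_index_neq q x y : regular copy_sigma q ->
  x \in q -> y \in q -> y.1 = sA x.1 -> x.2 != y.2.
Proof.
move=> /allP reg_q xq yq y_sx; apply: contraNneq (reg_q x xq) => x_y.
suff -> : copy_sigma x = y by [].
by rewrite /copy_sigma; case: y yq y_sx x_y => y1 y2 _ /= -> ->.
Qed.

Lemma split_lift_regular q : uniq (map fst q) -> regular copy_sigma q ->
  regular (split_sigma sA) (split_lift q).
Proof.
move=> uniq_q reg_q; apply/allP=> _ /mapP [x xq ->].
apply/negP=> /mapP [y yq [y_sx]]; have x_sy : x.1 = sA y.1 by rewrite -y_sx sAK.
rewrite (split_labelE uniq_q yq (esym y_sx)) (split_labelE uniq_q xq x_sy).
have := copy_sigma_index_neq reg_q xq yq (esym y_sx).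
by rewrite neq_ltn => /orP[] lt_xy; rewrite lt_xy ltnNge ltnW.
Qed.

Lemma split_lift_arc (phi : A -> nat) q : uniq (map fst q) ->
  regular copy_sigma q -> all (fun x => x.2 < phi x.1) q ->
  all (split_arc phi) (split_lift q).
Proof.
move=> uniq_q reg_q /allP lt_q; apply/allP=> _ /mapP [x xq ->].
rewrite /split_arc /split_cap /=; case: ifP => [_ | /negbT/allPn [y yq]].
  by rewrite uphalf_gt0 (leq_ltn_trans (leq0n _) (lt_q x xq)).
rewrite negb_imply -leqNgt => /andP[/eqP y_sx le_yx].
have lt_yx : y.2 < x.2.
  by rewrite ltn_neqAle le_yx eq_sym (copy_sigma_index_neq reg_q xq yq y_sx).
by rewrite half_gt0 (leq_ltn_trans (leq_ltn_trans (leq0n _) lt_yx) (lt_q x xq)).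
Qed.

End SplitLift.

Lemma deg_copies (V : eqType) (A : finType) (f : A -> V) (phi : A -> nat) n v :
  (forall a, phi a <= n) ->
  deg [set x : A * 'I_n | x.2 < phi x.1] (fun x => f x.1) v =
  \sum_(a | f a == v) phi a.
Proof.
move=> phi_n; rewrite /deg.
transitivity (\sum_a \sum_(i < n | i < phi a) (f a == v : nat)).
  by rewrite pair_big_dep; apply: eq_bigl => x; rewrite inE.
rewrite [RHS]big_mkcond; apply: eq_bigr => a _.
rewrite -(big_ord_widen _ (fun _ => (f a == v) : nat) (phi_n a)).
by rewrite sum_nat_const card_ord; case: (f a == v); rewrite ?muln1 ?muln0.
Qed.

Lemma split_regular_path_of_excess (V A : finType) (tl hd : A -> V)
    (sV : V -> V) (sA : A -> A) (s : V) (phi : A -> nat) :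
  skew_symmetric tl hd sV sA -> symmetric_fun sA phi ->
  (forall v, v != s -> v != sV s ->
     \sum_(a | tl a == v) phi a = \sum_(a | hd a == v) phi a) ->
  \sum_(a | hd a == s) phi a < \sum_(a | tl a == s) phi a ->
  exists p, split_regular_path tl hd sA phi s (sV s) p.
Proof.
case=> sV_neq sVK sA_neq sAK skew phiS bal exc.
pose n := (\max_a phi a).+1.
have phi_n a : phi a <= n by rewrite ltnW // ltnS leq_bigmax.
pose D := [set x : A * 'I_n | x.2 < phi x.1].
pose sA2 := copy_sigma sA (n := n).
have sA2_neq x : sA2 x != x by apply: contraNneq (sA_neq x.1) => /(congr1 fst) /= ->.
have sA2K : involutive sA2 by move=> x; rewrite /sA2 /copy_sigma sAK; case: x.
have exD : symmetric_excess sV sA2 s D (fun x => tl x.1) (fun x => hd x.1).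
  split=> [x | x | v v_s v_s' | ]; rewrite ?deg_copies //; first exact: skew.
  - by rewrite !inE /= phiS.
  - exact: bal.
have [p /and3P [p_D walk_p reg_p]] := regular_walk_of_excess sV_neq sVK sA2_neq sA2K exD.
have [q [walk_q sub_q uniq_q]] := is_walk_shorten walk_p.
have uniq_q1 : uniq (map fst q) by apply: (@map_uniq _ _ tl); rewrite -map_comp.
have reg_q : regular sA2 q := regular_sub sub_q reg_p.
exists (split_lift sA q); apply/and3P; split.
- apply: split_lift_arc => //.
  by apply/allP=> x /sub_q /(allP p_D) /=; rewrite inE.
- by rewrite is_walk_map.
- exact: split_lift_regular.
Qed.

Lemma split_arc_mono (A : Type) (h h' : A -> nat) x :
  (forall a, h a <= h' a) -> split_arc h x -> split_arc h' x.
Proof.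
rewrite /split_arc /split_cap => le_hh'; case: x.2 => /leq_trans; apply.
  exact: uphalf_leq.
exact: half_leq.
Qed.

Lemma split_path_count_le (A : eqType) (sA : A -> A) (h : A -> nat)
    (q : seq (A * bool)) a :
  involutive sA -> symmetric_fun sA h -> all (split_arc h) q ->
  regular (split_sigma sA) q -> uniq (map fst q) ->
  count_mem a (map fst q ++ mirror sA (map fst q)) <= h a.
Proof.
move=> sAK hS /allP q_arc /allP reg_q uniq_q.
rewrite count_mem_mirror // !count_uniq_mem //.
have arc_gt0 b l : (b, l) \in q -> 0 < h b.
  move/q_arc; rewrite /split_arc /split_cap /=.
  by case: l; rewrite ?uphalf_gt0 ?half_gt0 // => /ltnW.
case: (boolP (a \in _)) => [/mapP [[a1 l] aq /= ->] | _];
  case: (boolP (_ \in _)) => [/mapP [[b l'] bq /= b_sa] | _] //=.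
- have l_l' : l != l'.
    by apply: contraNneq (reg_q _ aq) => ->; rewrite /split_sigma /= b_sa.
  suff : split_arc h (a1, false) \/ split_arc h (sA a1, false).
    by rewrite /split_arc /split_cap /= hS half_gt0; case.
  case: l l' l_l' aq bq => -[] // _ aq bq; [right | left]; rewrite ?b_sa.
    exact: q_arc bq.
  exact: q_arc aq.
- exact: arc_gt0 aq.
- by rewrite -hS b_sa; apply: arc_gt0 bq.
Qed.

Section Augmentation.
Variables (V E : finType) (tl hd : E -> V) (sV : V -> V) (sE : E -> E).
Variables (u : E -> nat) (s : V).
Hypotheses (skew : skew_symmetric tl hd sV sE) (u_sym : symmetric_fun sE u).

Local Notation is_ISflow := (is_ISflow tl hd sV sE u s).
Local Notation value := (flow_value tl hd).
Local Notation plus_value := (flow_value (plus_tl tl hd) (plus_hd tl hd)).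
Local Notation split_path f :=
  (split_regular_path (plus_tl tl hd) (plus_hd tl hd) (plus_sigma sE)
     (residual u f) s (sV s)).

Definition plus_diff (f g : E -> nat) (x : E + E) : nat :=
  match x with inl e => g e - f e | inr e => f e - g e end.

Lemma plus_value_diff f g v :
  plus_value v (plus_diff f g) = (value v g - value v f)%R.
Proof.
rewrite (flow_value_shift tl hd (f := f) (g := g) (h := plus_diff f g)) => [|e /=].
  by rewrite addrC addKr.
lia.
Qed.

Lemma split_path_of_larger_flow f g : is_ISflow f -> is_ISflow g ->
  (value s f < value s g)%R -> exists p : seq ((E + E) * bool), split_path f p.
Proof.
move=> [_ f_cons f_sym] [g_u g_cons g_sym] lt_fg.
have [p /and3P [p_arc walk_p reg_p]] : exists p,
    split_regular_path (plus_tl tl hd) (plus_hd tl hd) (plus_sigma sE)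
      (plus_diff f g) s (sV s) p.
  apply: split_regular_path_of_excess (plus_skew skew) _ _ _ => [x|v v_s v_s'|].
  - by case: x => e /=; rewrite f_sym g_sym.
  - apply/esym/flow_value_eq0; rewrite plus_value_diff.
    by rewrite (flow_value_eq0 tl hd f v).1 ?(flow_value_eq0 tl hd g v).1 ?subrr; auto.
  - by rewrite -flow_value_gt0 plus_value_diff subr_gt0.
exists p; apply/and3P; split => //; apply/allP=> x /(allP p_arc).
by apply: split_arc_mono => -[e|e] /=; [apply: leq_sub2r | apply: leq_subr].
Qed.

Definition augment (f : E -> nat) (c : E + E -> nat) (e : E) : nat :=
  f e + c (inl e) - c (inr e).

Lemma value_augment f c v : (forall e, c (inr e) <= f e) ->
  value v (augment f c) = (value v f + plus_value v c)%R.
Proof.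
by move=> c_f; apply: flow_value_shift => e; have := c_f e; rewrite /augment; lia.
Qed.

Lemma larger_flow_of_split_path f : is_ISflow f ->
  (exists p : seq ((E + E) * bool), split_path f p) ->
  exists2 g, is_ISflow g & value s g = (value s f + 2)%R.
Proof.
have [sV_neq sVK _ sPK skewP] := plus_skew skew.
move=> [f_u f_cons f_sym] [p /and3P [p_arc walk_p reg_p]].
have [q [walk_q sub_q uniq_q]] := is_walk_shorten walk_p.
have walk_q1 : is_walk (plus_tl tl hd) (plus_hd tl hd) s (sV s) (map fst q).
  by rewrite is_walk_map.
pose c x := count_mem x (map fst q ++ mirror (plus_sigma sE) (map fst q)).
have c_res x : c x <= residual u f x.
  apply: split_path_count_le => //.
  - by case=> e /=; rewrite ?u_sym f_sym.
  - by apply/allP=> y /sub_q /(allP p_arc).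
  - exact: regular_sub sub_q reg_p.
  - by apply: (@map_uniq _ _ (plus_tl tl hd)); rewrite -map_comp.
have c_sym x : c (plus_sigma sE x) = c x by rewrite /c !count_mem_mirror // sPK addnC.
have c_f e : c (inr e) <= f e by exact: c_res (inr e).
have value_c v := flow_value_walk_mirror v sVK skewP walk_q1.
exists (augment f c); first split.
- by move=> e; have := c_res (inl e); have := f_u e; rewrite /augment /=; lia.
- move=> v v_s v_s'; apply/flow_value_eq0.
  rewrite value_augment // value_c (negbTE v_s) (negbTE v_s').
  by rewrite (flow_value_eq0 _ _ _ _).1 ?f_cons.
- move=> e; rewrite /augment f_sym.
  by rewrite -[inl _]/(plus_sigma sE (inl e)) -[inr _]/(plus_sigma sE (inr e)) !c_sym.
- by rewrite value_augment // value_c eqxx eq_sym (negbTE (sV_neq s)).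
Qed.

End Augmentation.

Theorem mainTheorem5 (V E : finType) (tl hd : E -> V) (sV : V -> V)
    (sE : E -> E) (u : E -> nat) (s : V) (f : E -> nat) :
  skew_symmetric tl hd sV sE ->
  symmetric_fun sE u ->
  is_ISflow tl hd sV sE u s f ->
  (forall g : E -> nat, is_ISflow tl hd sV sE u s g ->
      (flow_value tl hd s g <= flow_value tl hd s f)%R)
  <->
  ~ (exists p : seq ((E + E) * bool),
       split_regular_path (plus_tl tl hd) (plus_hd tl hd) (plus_sigma sE)
         (residual u f) s (sV s) p).
Proof.
move=> skew u_sym f_flow; split=> [f_max path | no_path g g_flow].
  have [g g_flow g_value] := larger_flow_of_split_path skew u_sym f_flow path.
  by have := f_max g g_flow; rewrite g_value; lia.
rewrite leNgt; apply/negP => lt_fg; apply: no_path.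
exact: (split_path_of_larger_flow skew f_flow g_flow lt_fg).
Qed.
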